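(* Let $q$ be a prime power, $m$ a positive integer, $n=q^m-1$, and $\delta$ an integer with $2\le\delta\le q^{\lceil m/2\rceil}+1$ (and $\delta\le n$). Suppose $$\sum_{i=0}^{\lfloor(\delta+1)/2\rfloor}\binom{q^m-1}{i}(q-1)^i> q^{m\lceil(\delta-1)(1-1/q)\rceil}.$$ Then the minimum distance $d$ of $\mathcal{BCH}(n,q;\delta)$ satisfies $d\in\{\delta,\delta+1\}$. If moreover $\delta\equiv0\pmod q$, then $d=\delta+1$.
   Context: Let $\alpha$ be a primitive element of $\mathbf{F}_{q^m}$ and $n=q^m-1$; $C_x=\{xq^k\bmod n\mid k\in\mathbf{Z}\}$. For $2\le\delta\le n$, $\mathcal{BCH}(n,q;\delta)$ is the cyclic code of length $n$ over $\mathbf{F}_q$ with generator polynomial $\prod_{z\in Z}(x-\alpha^z)$, where $Z=C_1\cup\cdots\cup C_{\delta-1}$. *)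

From HB Require Import structures.
From mathcomp Require Import all_boot all_order all_algebra all_field.
Set Implicit Arguments. Unset Strict Implicit. Unset Printing Implicit Defensive.
Import GRing.Theory.
Local Open Scope ring_scope.

(* Membership of z in Z = C_1 u ... u C_(delta-1), the union of the
   q-cyclotomic cosets modulo n; C_x = { x q^k mod n | k }.  Since
   q^m = 1 mod n, k ranges over 0 <= k < m without loss. *)
Definition inZ (q m n delta : nat) (z : nat) : bool :=
  [exists x : 'I_delta, (0 < (x : nat))%N &&
     [exists k : 'I_m, z == (x * q ^ k) %% n]]%N.

Definition bch_genpoly (L : fieldType) (q m n delta : nat) (alpha : L)
  : {poly L} :=
  \prod_(z < n | inZ q m n delta z) ('X - (alpha ^+ z)%:P).

Definition word_poly (F L : fieldType) (f : {rmorphism F -> L}) (n : nat)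
  (c : 'rV[F]_n) : {poly L} :=
  \sum_(i < n) (f (c 0 i)) *: 'X^i.

Definition BCH (F L : fieldType) (f : {rmorphism F -> L}) (q m n delta : nat)
  (alpha : L) : pred 'rV[F]_n :=
  fun c => bch_genpoly q m n delta alpha %| word_poly f c.

Definition wt (F : fieldType) (n : nat) (c : 'rV[F]_n) : nat :=
  #|[set i : 'I_n | c 0 i != 0]|.

Definition is_min_dist (F : finFieldType) (n : nat) (C : pred 'rV[F]_n)
  (d : nat) : Prop :=
  (exists2 c, C c & (c != 0) && (wt c == d)) /\
  (forall c, C c -> c != 0 -> (d <= wt c)%N).

Arguments BCH {F L} f q m n delta alpha.

From HB Require Import structures.
From mathcomp Require Import all_boot all_order all_algebra all_field.
From mathcomp Require Import zify ring.
Import GRing.Theory.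

(* A codeword c vanishes at alpha^j for 0 < j < delta, so the BCH bound gives
   wt c >= delta; when q | delta, alpha^delta = (alpha^(delta/q))^q is a root
   too, because x |-> x^q fixes the coefficients of c, whence wt c >= delta + 1.
   By the same Frobenius argument a word is already a codeword as soon as it
   vanishes at alpha^j for the r <= ceil((delta - 1)(1 - 1/q)) exponents
   0 < j < delta not divisible by q.  These r syndromes take at most q^(m r)
   values, fewer than the number of words in the Hamming ball of radius
   t = floor((delta + 1)/2); so two words of the ball share their syndromes,
   and their difference is a nonzero codeword of weight <= 2t <= delta + 1. *)

Lemma count_ndvd_iota q a : 0 < q ->
  count (fun x => ~~ (q %| x)) (iota 1 a) = a - a %/ q.
Proof.
move=> q0; elim: a => [|a IH]; first by rewrite div0n.
rewrite -[a.+1]addn1 iotaD count_cat IH /= addn0 addn1 (divnS _ q0) add1n.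
have : a %/ q <= a by apply: leq_div.
by case: (q %| a.+1) => /=; lia.
Qed.

Lemma subn_div_leq_ceil q a : 0 < q ->
  a - a %/ q <= (a * (q - 1) + (q - 1)) %/ q.
Proof.
move=> q0; rewrite leq_divRL // {1 3}(divn_eq a q).
have : a %% q < q by rewrite ltn_mod.
by nia.
Qed.

Set Implicit Arguments. Unset Strict Implicit. Unset Printing Implicit Defensive.
Local Open Scope ring_scope.

Section WordPoly.
Variables (F L : finFieldType) (f : {rmorphism F -> L}).

Lemma pchar_nat_card : [pchar L].-nat #|F|.
Proof.
have [p _ pc] := finPcharP F.
rewrite (eq_pnat _ (fmorph_pchar f)) (eq_pnat _ (pcharf_eq pc)).
by rewrite (card_pprimeChar pc) pnatX pnat_id ?(pcharf_prime pc).
Qed.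

Lemma exprD_card_pow k (x y : L) :
  (x + y) ^+ (#|F| ^ k) = x ^+ (#|F| ^ k) + y ^+ (#|F| ^ k).
Proof. by apply: exprDn_pchar; rewrite pnatX pchar_nat_card. Qed.

Lemma expf_card_pow k (x : F) : x ^+ (#|F| ^ k) = x.
Proof. by elim: k => [|k IH]; rewrite ?expr1 // expnSr exprM IH expf_card. Qed.

Lemma horner_word_poly n (c : 'rV[F]_n) x :
  (word_poly f c).[x] = \sum_(i < n) f (c 0 i) * x ^+ i.
Proof.
by rewrite horner_sum; apply: eq_bigr => i _; rewrite hornerZ hornerXn.
Qed.

Lemma word_polyB n (a b : 'rV[F]_n) :
  word_poly f (a - b) = word_poly f a - word_poly f b.
Proof.
by rewrite /word_poly -sumrB; apply: eq_bigr => i _; rewrite !mxE rmorphB scalerBl.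
Qed.

Lemma sum_coord_horner n (c : 'rV[F]_n) (x : L) (p : {poly L}) :
  \sum_(i < n) f (c 0 i) * x ^+ i * p.[x ^+ i] =
  \sum_(e < size p) p`_e * (word_poly f c).[x ^+ e.+1].
Proof.
under eq_bigr => i _ do rewrite horner_coef mulr_sumr.
rewrite exchange_big; apply: eq_bigr => e _; rewrite horner_word_poly mulr_sumr.
by apply: eq_bigr => i _; rewrite -!exprM mulSn exprD mulnC; ring.
Qed.

Lemma word_poly_frobenius n (c : 'rV[F]_n) x k :
  (word_poly f c).[x ^+ (#|F| ^ k)] = (word_poly f c).[x] ^+ (#|F| ^ k).
Proof.
have Q0 : (0 < #|F| ^ k)%N by rewrite expn_gt0 (ltn_trans _ (finNzRing_gt1 F)).
have z0 : (0 : L) ^+ (#|F| ^ k) = 0 by rewrite expr0n eqn0Ngt Q0.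
rewrite !horner_word_poly (big_morph _ (@exprD_card_pow k) z0).
by apply: eq_bigr => i _; rewrite exprMn -rmorphXn expf_card_pow -!exprM mulnC.
Qed.

Lemma word_poly_frobenius_root n (c : 'rV[F]_n) x k :
  (word_poly f c).[x] = 0 -> (word_poly f c).[x ^+ (#|F| ^ k)] = 0.
Proof.
move=> c0; rewrite word_poly_frobenius c0 expr0n expn_eq0.
by rewrite gtn_eqF ?(ltn_trans _ (finNzRing_gt1 F)).
Qed.

Lemma word_poly_roots_ndvd n (c : 'rV[F]_n) x D :
  (forall j, (0 < j < D)%N -> ~~ (#|F| %| j)%N -> (word_poly f c).[x ^+ j] = 0) ->
  forall j, (0 < j < D)%N -> (word_poly f c).[x ^+ j] = 0.
Proof.
move=> hndvd; elim/ltn_ind => j IH /andP[j0 jD].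
have [qj|] := boolP (#|F| %| j)%N; last by apply: hndvd; rewrite j0.
have q1 := finNzRing_gt1 F.
rewrite -(divnK qj) -{2}[#|F|]expn1 exprM word_poly_frobenius_root // IH //.
  by rewrite ltn_Pdiv //; lia.
rewrite divn_gt0 ?(ltnW q1) ?(dvdn_leq j0 qj) //=.
exact: leq_ltn_trans (leq_div _ _) jD.
Qed.

End WordPoly.

Section Weight.
Variables (F : finFieldType) (n : nat).
Implicit Types a b c e : 'rV[F]_n.

Lemma wt_eq0 c : (wt c == 0%N) = (c == 0).
Proof.
rewrite /wt cards_eq0; apply/eqP/eqP => [c0|->]; last first.
  by apply/setP => i; rewrite !inE mxE eqxx.
apply/matrixP => i j; rewrite (ord1 i) mxE.
by have := in_set0 j; rewrite -c0 inE => /negbFE/eqP.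
Qed.

Lemma wtB_le a b : (wt (a - b) <= wt a + wt b)%N.
Proof.
rewrite /wt; apply: leq_trans (leq_card_setU _ _).
apply: subset_leq_card; apply/subsetP => i; rewrite !inE mxE.
by apply: contraR; rewrite negb_or !negbK mxE => /andP[/eqP -> /eqP ->]; rewrite subr0.
Qed.

Lemma card_ffun_support k :
  #|[set g : {ffun 'I_n -> F} | #|[set j | g j != 0]| == k]| = ('C(n, k) * #|F|.-1 ^ k)%N.
Proof.
rewrite -sum1_card.
rewrite (partition_big (s := index_enum _) (fun g : {ffun 'I_n -> F} => [set j | g j != 0])
  (fun S : {set 'I_n} => #|S| == k)); last by move=> g; rewrite inE.
transitivity (\sum_(S : {set 'I_n} | #|S| == k) #|F|.-1 ^ k)%N; last first.
  rewrite sum_nat_const -[in RHS](card_ord n) -card_draws.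
  by congr (_ * _)%N; apply: eq_card => S; rewrite inE.
apply: eq_bigr => S /eqP cS.
rewrite sum1dep_card -cS -(cardC1 (0 : F)) -(card_pffun_on 0 S (predC1 (0 : F))).
apply: eq_card => g; rewrite !inE; apply/idP/pffun_onP.
  move=> /andP[_ /eqP <-]; split; first by apply/subsetP => j; rewrite supportE inE.
  by move=> y /imageP[j + ->]; rewrite !inE.
move=> [/subsetP s1 s2]; suff -> : [set j | g j != 0] = S by rewrite cS !eqxx.
apply/setP => j; rewrite inE; apply/idP/idP; first exact: s1.
by move=> jS; have := s2 (g j) (map_f _ _); rewrite !inE; apply; rewrite mem_enum.
Qed.

Lemma card_wt_eq k : #|[set e : 'rV[F]_n | wt e == k]| = ('C(n, k) * #|F|.-1 ^ k)%N.
Proof.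
pose ffun_of e := [ffun j => e 0 j].
pose row_of (g : {ffun 'I_n -> F}) : 'rV[F]_n := \row_j g j.
have ffun_ofK : cancel ffun_of row_of.
  by move=> e; apply/matrixP => i j; rewrite (ord1 i) mxE ffunE.
have row_ofK : cancel row_of ffun_of by move=> g; apply/ffunP => j; rewrite ffunE mxE.
rewrite -card_ffun_support -(card_imset _ (can_inj ffun_ofK)).
rewrite (can2_imset_pre _ ffun_ofK row_ofK); apply: eq_card => g; rewrite !inE.
by rewrite /wt; congr (_ == _); apply: eq_card => j; rewrite !inE mxE.
Qed.

Lemma card_wt_le t :
  #|[set e : 'rV[F]_n | (wt e <= t)%N]| = (\sum_(0 <= i < t.+1) 'C(n, i) * #|F|.-1 ^ i)%N.
Proof.
elim: t => [|t IH].
  by rewrite big_nat1 -card_wt_eq; apply: eq_card => e; rewrite !inE leqn0.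
rewrite big_nat_recr //= -IH -card_wt_eq -cardsUI.
have -> : [set e : 'rV[F]_n | (wt e <= t)%N] :&: [set e | wt e == t.+1] = set0.
  by apply/setP => e; rewrite !inE; case: eqP => [->|]; rewrite ?ltnn ?andbF.
by rewrite cards0 addn0; apply: eq_card => e; rewrite !inE leq_eqVlt ltnS orbC.
Qed.

Lemma exists_low_weight_collision (U : finType) (phi : 'rV[F]_n -> U) t :
  (#|U| < #|[set e : 'rV[F]_n | (wt e <= t)%N]|)%N ->
  exists a b, [/\ phi a = phi b, a - b != 0 & (wt (a - b) <= t.*2)%N].
Proof.
set B := [set e | _] => ltUB.
have /dinjectivePn[a aB [b /andP[ba bB] phiab]] : ~~ dinjectiveb phi B.
  apply: contraL ltUB => /dinjectiveP/card_in_imset <-.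
  by rewrite -leqNgt max_card.
exists a, b; split; rewrite // ?subr_eq0 1?eq_sym //.
rewrite !inE in aB bB.
by rewrite -addnn (leq_trans (wtB_le a b)) // leq_add.
Qed.

Lemma exists_min_dist (C : pred 'rV[F]_n) c :
  C c -> c != 0 -> exists2 d, is_min_dist C d & (d <= wt c)%N.
Proof.
move=> Cc c0; pose P w := [exists e, [&& C e, e != 0 & wt e == w]].
have exP : exists w, P w by exists (wt c); apply/existsP; exists c; rewrite Cc c0 eqxx.
have [d /existsP[e /and3P[Ce e0 /eqP ed]] dmin] := ex_minnP exP.
have low e' : C e' -> e' != 0 -> (d <= wt e')%N.
  by move=> Ce' e'0; apply: dmin; apply/existsP; exists e'; rewrite Ce' e'0 /=.
by exists d; [split; [exists e; rewrite // e0 ed /= | ] | apply: low].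
Qed.

End Weight.

Section BCHBound.
Variables (F L : finFieldType) (f : {rmorphism F -> L}) (n : nat) (alpha : L).
Hypothesis halpha : n.-primitive_root alpha.

Lemma prim_expr_inj (i j : 'I_n) : alpha ^+ i = alpha ^+ j -> i = j.
Proof.
by move/eqP; rewrite (eq_prim_root_expr halpha) !modn_small // => /eqP/val_inj.
Qed.

Lemma bch_bound (c : 'rV[F]_n) D : c != 0 ->
  (forall j, (0 < j < D)%N -> (word_poly f c).[alpha ^+ j] = 0) -> (D <= wt c)%N.
Proof.
move=> c0 hroots; rewrite leqNgt; apply/negP => ltcD.
(* p vanishes exactly on the alpha^i with i in the support of c but i != i0,
   and size p = wt c, so pairing c with p yields a combination of syndromes
   at alpha^1, ..., alpha^(wt c), all zero, in which only the i0 term survives. *)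
set S := [set i | c 0 i != 0].
have [i0 i0S] : exists i0, i0 \in S by apply/card_gt0P; rewrite lt0n wt_eq0.
pose p := \prod_(i in S :\ i0) ('X - (alpha ^+ i)%:P).
have root_p (i : 'I_n) : root p (alpha ^+ i) = (i \in S :\ i0).
  rewrite /p -big_enum -(big_map (fun i : 'I_n => alpha ^+ i) xpredT (fun z => 'X - z%:P)).
  rewrite root_prod_XsubC; apply/mapP/idP => [[j] | iS]; last by exists i; rewrite ?mem_enum.
  by rewrite mem_enum => jS /prim_expr_inj ->.
have size_p : size p = wt c.
  rewrite /p -big_enum -(big_map (fun i : 'I_n => alpha ^+ i) xpredT (fun z => 'X - z%:P)).
  by rewrite size_prod_XsubC size_map -cardE /wt -/S (cardsD1 i0 S) i0S.
have syndromes0 : \sum_(e < size p) p`_e * (word_poly f c).[alpha ^+ e.+1] = 0.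
  apply: big1 => e _; rewrite hroots ?mulr0 //=.
  by apply: leq_ltn_trans ltcD; rewrite -size_p.
move: syndromes0; rewrite -(sum_coord_horner f c alpha p) (bigD1 i0) //= big1 ?addr0 => [|i ii0].
  apply/eqP; rewrite !mulf_neq0 ?fmorph_eq0 ?expf_neq0 //.
  - by rewrite inE in i0S.
  - by rewrite (prim_root_eq0 halpha) -lt0n (prim_order_gt0 halpha).
  by rewrite -rootE root_p !inE eqxx.
have [iS|] := boolP (i \in S).
  have /rootP -> : root p (alpha ^+ i) by rewrite root_p in_setD1 ii0.
  by rewrite mulr0.
by rewrite inE negbK => /eqP ->; rewrite rmorph0 !mul0r.
Qed.

End BCHBound.

Section BCHCode.
Variables (F L : finFieldType) (f : {rmorphism F -> L}) (m n delta : nat) (alpha : L).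
Hypotheses (halpha : n.-primitive_root alpha) (m_gt0 : (0 < m)%N).
Hypothesis delta_le_n : (delta <= n)%N.
Local Notation C := (BCH f #|F| m n delta alpha).

Lemma BCH_roots c :
  C c -> forall j, (0 < j < delta)%N -> (word_poly f c).[alpha ^+ j] = 0.
Proof.
move=> Cc j /andP[j0 jd]; apply/rootP; apply: root_dvdp Cc _.
have jn : (j < n)%N by apply: leq_trans jd _.
rewrite /root /bch_genpoly horner_prod (bigD1 (Ordinal jn)) /=.
  by rewrite hornerXsubC subrr mul0r.
apply/existsP; exists (Ordinal jd); rewrite /= j0 /=.
by apply/existsP; exists (Ordinal m_gt0); rewrite /= expn0 muln1 modn_small.
Qed.

Lemma BCH_of_roots c :
  (forall j, (0 < j < delta)%N -> (word_poly f c).[alpha ^+ j] = 0) -> C c.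
Proof.
move=> hroots; rewrite /BCH /bch_genpoly -big_filter.
rewrite -(big_map (fun z : 'I_n => alpha ^+ z) xpredT (fun a => 'X - a%:P)).
apply: uniq_roots_dvdp; last first.
  by rewrite uniq_rootsE (map_inj_uniq (prim_expr_inj halpha)) filter_uniq ?index_enum_uniq.
apply/allP => a /mapP[z]; rewrite mem_filter.
move=> /andP[/existsP[x /andP[x0 /existsP[k /eqP ->]]] _] ->.
rewrite (prim_expr_mod halpha) exprM; apply/rootP/word_poly_frobenius_root/hroots.
by rewrite x0 /=.
Qed.

Lemma BCH_wt_ge c : C c -> c != 0 -> (delta <= wt c)%N.
Proof. move=> /BCH_roots Cc c0; exact: (bch_bound halpha c0 Cc). Qed.

Lemma BCH_wt_ge_dvd c : (#|F| %| delta)%N -> C c -> c != 0 -> (delta < wt c)%N.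
Proof.
move=> qdelta /BCH_roots Cc c0; apply: (bch_bound halpha c0).
apply: word_poly_roots_ndvd => j /andP[j0 jdelta] qj; apply: Cc.
by rewrite j0 ltn_neqAle -ltnS jdelta andbT; apply: contraNneq qj => ->.
Qed.

Lemma BCH_low_weight t :
  (#|L| ^ count (fun j => ~~ (#|F| %| j)%N) (iota 1 delta.-1)
    < #|[set e : 'rV[F]_n | (wt e <= t)%N]|)%N ->
  exists2 c, C c & (c != 0) && (wt c <= t.*2)%N.
Proof.
set R := [seq j <- iota 1 delta.-1 | ~~ (#|F| %| j)%N].
pose syndrome (c : 'rV[F]_n) := map_tuple (fun j => (word_poly f c).[alpha ^+ j]) (in_tuple R).
rewrite -size_filter -/R -(card_tuple (size R) L) => /(exists_low_weight_collision syndrome).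
move=> [a [b [/(congr1 val)/= /eq_in_map eq_ab ab0 wt_ab]]].
exists (a - b); last by rewrite ab0.
apply/BCH_of_roots/word_poly_roots_ndvd => j /andP[j0 jdelta] qj.
have jR : j \in R by rewrite mem_filter qj mem_iota j0 add1n (ltn_predK jdelta).
by rewrite word_polyB hornerD hornerN (eq_ab j jR) subrr.
Qed.

End BCHCode.

Theorem mainTheorem7 (F L : finFieldType) (f : {rmorphism F -> L})
  (q m delta : nat) (alpha : L)
  (hF : #|F| = q) (hm : (0 < m)%N) (hL : #|L| = (q ^ m)%N)
  (halpha : (q ^ m - 1)%N.-primitive_root alpha)
  (hdelta2 : (2 <= delta)%N)
  (hdeltaub : (delta <= q ^ ((m + 1) %/ 2) + 1)%N)
  (hdeltan : (delta <= q ^ m - 1)%N)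
  (hsum : (q ^ (m * (((delta - 1) * (q - 1) + (q - 1)) %/ q))
           < \sum_(0 <= i < (delta + 1) %/ 2 + 1) 'C(q ^ m - 1, i) * (q - 1) ^ i)%N) :
  exists d : nat, is_min_dist (BCH f q m (q ^ m - 1) delta alpha) d /\
    (d = delta \/ d = delta.+1)%N /\
    ((q %| delta)%N -> d = delta.+1)%N.
Proof.
subst q; set n := (#|F| ^ m - 1)%N in halpha hdeltan hsum *.
have q0 : (0 < #|F|)%N := ltnW (finNzRing_gt1 F).
have [c0 Cc0 /andP[c0_nz wt_c0]] : exists2 c, BCH f #|F| m n delta alpha c &
    (c != 0) && (wt c <= ((delta + 1) %/ 2).*2)%N.
  apply: (BCH_low_weight f m halpha).
  rewrite card_wt_le hL -expnM -!subn1 -[((_ %/ _)%N).+1]addn1; apply: leq_ltn_trans hsum.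
  by rewrite leq_pexp2l // leq_mul2l count_ndvd_iota // subn_div_leq_ceil ?orbT.
have [d dmin le_d_c0] := exists_min_dist Cc0 c0_nz.
have [[c1 Cc1 /andP[c1_nz /eqP wt_c1]] _] := dmin.
have le_d_delta1 : (d <= delta.+1)%N.
  by rewrite (leq_trans le_d_c0) // (leq_trans wt_c0) // -muln2 addn1 leq_trunc_div.
have le_delta_d : (delta <= d)%N by rewrite -wt_c1 (BCH_wt_ge halpha hm hdeltan Cc1 c1_nz).
exists d; split=> //; split=> [|q_delta]; first lia.
by apply/eqP; rewrite eqn_leq le_d_delta1 -wt_c1 (BCH_wt_ge_dvd halpha hm hdeltan q_delta Cc1 c1_nz).
Qed.
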